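(* Let $\mathcal{A}\in\mathbb{R}^{d\times\cdots\times d}$ be an order-$k$ real tensor with the same dimension $d$ in all modes. For every level $1\le\ell\le k$, \[ d^{-(k-\lceil k/\ell\rceil)/2}\|\mathcal{A}\|_F\le\min_{\pi\in\mathcal{P}^\ell_{[k]}}\|\mathrm{Unfold}_\pi(\mathcal{A})\|_\sigma . \]
   Context: $\|\mathcal{A}\|_F$ is the Frobenius norm. For a real tensor $\mathcal{T}\in\mathbb{R}^{e_1\times\cdots\times e_m}$, $\|\mathcal{T}\|_\sigma=\sup\{\sum t_{i_1\dots i_m}x^{(1)}_{i_1}\cdots x^{(m)}_{i_m}:\ \mathbf{x}_n\in\mathbb{R}^{e_n},\ \|\mathbf{x}_n\|_2=1\}$. $\mathcal{P}^\ell_{[k]}$ is the set of partitions of $[k]$ into exactly $\ell$ nonempty blocks. Unfolding: for $\pi=\{B_1,\dots,B_\ell\}$, $\mathrm{Unfold}_\pi(\mathcal{A})$ is the order-$\ell$ tensor of dimensions $(d^{|B_1|},\dots,d^{|B_\ell|})$ whose entry at $(m_1,\dots,m_\ell)$ is $a_{i_1\dots i_k}$, where $m_j$ corresponds to $(i_r)_{r\in B_j}$ under a fixed bijection $[d]^{B_j}\to[d^{|B_j|}]$. *)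

From HB Require Import structures.
From mathcomp Require Import all_boot all_order all_algebra.
From mathcomp Require Import all_classical all_reals all_analysis.
Set Implicit Arguments. Unset Strict Implicit. Unset Printing Implicit Defensive.
Import Order.TTheory GRing.Theory Num.Theory.
Local Open Scope ring_scope.

Definition tensor (R : realType) (k d : nat) := {ffun 'I_k -> 'I_d} -> R.

Definition frob (R : realType) (k d : nat) (A : tensor R k d) : R :=
  Num.sqrt (\sum_(i : {ffun 'I_k -> 'I_d}) A i ^+ 2).

Definition snorm (R : realType) (J : finType) (e : J -> nat)
  (t : {dffun forall j : J, 'I_(e j)} -> R) : R :=
  sup [set s : R | exists x : forall j : J, 'I_(e j) -> R,
        (forall j, \sum_(i < e j) x j i ^+ 2 = 1) /\
        s = \sum_(m : {dffun forall j : J, 'I_(e j)}) t m * \prod_(j : J) x j (m j)].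

Definition blockT (k d : nat) (B : {set 'I_k}) :=
  {ffun {r : 'I_k | r \in B} -> 'I_d}.

Lemma card_blockT (k d : nat) (B : {set 'I_k}) :
  #|{: blockT d B}| = (d ^ #|B|)%N.
Proof. by rewrite card_ffun card_ord card_sig. Qed.

Definition restr (k d : nat) (B : {set 'I_k}) (i : {ffun 'I_k -> 'I_d}) :
  blockT d B := [ffun s => i (val s)].

Definition enc (k d : nat) (B : {set 'I_k}) (i : {ffun 'I_k -> 'I_d}) :
  'I_(d ^ #|B|) := cast_ord (card_blockT d B) (enum_rank (restr B i)).

Definition blk (k : nat) (P : {set {set 'I_k}}) (j : 'I_#|P|) : {set 'I_k} :=
  enum_val j.

Definition unfold_dims (k d : nat) (P : {set {set 'I_k}}) (j : 'I_#|P|) : nat :=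
  (d ^ #|blk j|)%N.

(* For P a partition of [k] exactly one multi-index i
   matches, so the entry is written as the (one-term) sum below. *)
Definition unfold (R : realType) (k d : nat) (A : tensor R k d)
  (P : {set {set 'I_k}}) : {dffun forall j : 'I_#|P|, 'I_(unfold_dims d j)} -> R :=
  fun m => \sum_(i : {ffun 'I_k -> 'I_d} |
                 [forall j : 'I_#|P|, enc (blk j) i == m j]) A i.
Arguments unfold {R k d} A P _.

From HB Require Import structures.
From mathcomp Require Import all_boot all_order all_algebra.
From mathcomp Require Import all_classical all_reals all_analysis.
Set Implicit Arguments. Unset Strict Implicit. Unset Printing Implicit Defensive.
Import Order.TTheory GRing.Theory Num.Theory.
Local Open Scope ring_scope.

(* Let B be a largest block of the partition, so that |B| >= ceil(k/l).  Fixing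
   the indices outside B splits the entries of A into d^(k-|B|) fibers, and the
   heaviest fiber carries at least a d^-(k-|B|) share of ||A||_F^2.  Testing
   Unfold_P(A) against the basis vectors selected by the fiber on the other
   blocks and against the normalized fiber on B gives exactly the Frobenius norm
   of that fiber. *)

Lemma sum_sqr_delta (R : pzSemiRingType) (n : nat) (m0 : 'I_n) :
  \sum_m ((m == m0)%:R : R) ^+ 2 = 1.
Proof.
by rewrite (bigD1 m0) //= eqxx expr1n big1 ?addr0 // => m /negbTE->; rewrite expr0n.
Qed.

Lemma sqr_sum_subsingleton (R : pzSemiRingType) (T : finType) (p : pred T) (g : T -> R) :
  (forall a b, p a -> p b -> a = b) -> (\sum_(t | p t) g t) ^+ 2 = \sum_(t | p t) g t ^+ 2.
Proof.
move=> p_sub; case: (pickP p) => [t0 pt0 | p0]; last by rewrite !big_pred0 // expr0n.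
have pE t : p t = (t == t0) by apply/idP/eqP => [pt | ->]; [apply: p_sub | ].
by rewrite !(eq_bigl _ _ pE) !big_pred1_eq.
Qed.

Lemma prodr_natb (R : comPzSemiRingType) (T : finType) (p b : pred T) :
  \prod_(t | p t) ((b t)%:R : R) = [forall (t | p t), b t]%:R.
Proof.
have [all_b | /forallPn [t]] := boolP [forall (t | p t), b t].
  by apply: big1 => t pt; rewrite (implyP (forallP all_b t) pt).
by rewrite negb_imply => /andP [pt /negbTE bt]; rewrite (bigD1 t) //= bt mul0r.
Qed.

Lemma unit_vector_coord_le1 (R : realDomainType) (n : nat) (v : 'I_n -> R) (i : 'I_n) :
  \sum_(m < n) v m ^+ 2 = 1 -> `|v i| <= 1.
Proof.
move=> v1; rewrite -(@expr_le1 _ 2%N) // real_normK ?num_real //.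
by rewrite -v1 (bigD1 i) //= lerDl sumr_ge0 // => m _; apply: sqr_ge0.
Qed.

Section NormedDirection.
Variables (R : rcfType) (n : nat) (m0 : 'I_n) (v : 'I_n -> R).

Let sumsq := \sum_m v m ^+ 2.

Definition normed_dir : 'I_n -> R :=
  if sumsq == 0 then fun m => (m == m0)%:R else fun m => v m / Num.sqrt sumsq.

Let sumsq_ge0 : 0 <= sumsq. Proof. by apply: sumr_ge0 => m _; apply: sqr_ge0. Qed.

Lemma normed_dir_unit : \sum_m normed_dir m ^+ 2 = 1.
Proof.
rewrite /normed_dir; case: eqP => [_ | /eqP sumsq_neq0]; first exact: sum_sqr_delta.
under eq_bigr do rewrite expr_div_n sqr_sqrtr //.
by rewrite -mulr_suml divff.
Qed.

Lemma normed_dir_dot : \sum_m v m * normed_dir m = Num.sqrt sumsq.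
Proof.
rewrite /normed_dir; case: eqP => [sumsq0 | /eqP sumsq_neq0].
  rewrite sumsq0 sqrtr0 big1 // => m _.
  have /eqP : v m ^+ 2 = 0 by apply: (psumr_eq0P (fun m _ => sqr_ge0 (v m)) sumsq0).
  by rewrite sqrf_eq0 => /eqP->; rewrite mul0r.
have sqrt_neq0 : Num.sqrt sumsq != 0.
  by rewrite sqrtr_eq0 -ltNge lt_neqAle eq_sym sumsq_neq0 sumsq_ge0.
under eq_bigr do rewrite mulrA -expr2.
by rewrite -mulr_suml -/sumsq -{1}(sqr_sqrtr sumsq_ge0) expr2 mulfK.
Qed.

End NormedDirection.
Arguments normed_dir {R n}.

Section SpectralNorm.
Variables (R : realType) (J : finType) (e : J -> nat).
Implicit Types (t : {dffun forall j : J, 'I_(e j)} -> R).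

Lemma snorm_ge t (x : forall j : J, 'I_(e j) -> R) :
  (forall j, \sum_(i < e j) x j i ^+ 2 = 1) ->
  \sum_m t m * \prod_j x j (m j) <= snorm t.
Proof.
move=> x1; apply: ub_le_sup; last by exists x.
exists (\sum_m `|t m|) => _ [y [y1 ->]].
apply: (le_trans (ler_norm _)); apply: (le_trans (ler_norm_sum _ _ _)).
apply: ler_sum => m _; rewrite normrM normr_prod -[leRHS]mulr1 ler_wpM2l //.
by apply: prodr_ile1 => j _; rewrite normr_ge0 unit_vector_coord_le1.
Qed.

(* A zero-dimensional mode admits no unit vector, and [sup set0 = 0]. *)
Lemma snorm_dim0 t (j : J) : e j = 0%N -> snorm t = 0.
Proof.
move=> ej0; rewrite /snorm -[RHS](sup0 R); congr sup.
have no_index : 'I_(e j) -> False by rewrite ej0 => -[].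
apply/seteqP; split => // s [x [x1 _]]; move: (x1 j).
by rewrite big1 => [/esym/eqP|i]; [rewrite oner_eq0 | case: (no_index i)].
Qed.

End SpectralNorm.
Arguments snorm_dim0 {R J e} t j.

Section Fibers.
Variables (I D : finType) (B : {set I}).
Implicit Types c i : {ffun I -> D}.

Definition agree_off c i := [forall r, (r \notin B) ==> (i r == c r)].

Lemma card_agree_off i : #|[pred c | agree_off c i]| = (#|D| ^ #|B|)%N.
Proof.
pose ext (g : {ffun {r | r \in B} -> D}) :=
  [ffun r => if insub r is Some s then g s else i r].
have ext_inj : injective ext.
  move=> g1 g2 /ffunP ext12; apply/ffunP => s.
  by have := ext12 (val s); rewrite !ffunE valK.
have -> : #|B| = #|{: {r | r \in B}}| by rewrite card_sig.
rewrite -card_ffun -(card_codom ext_inj); apply: eq_card => c /=.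
rewrite inE; apply/forallP/codomP => [c_i | [g ->] r]; last first.
  by apply/implyP => rB; rewrite ffunE insubF ?(negbTE rB).
exists [ffun s => c (val s)]; apply/ffunP => r; rewrite !ffunE.
by case: insubP => [s _ <- | rB]; rewrite ?ffunE // -(eqP (implyP (c_i r) rB)).
Qed.

Lemma exists_heavy_fiber (R : realDomainType) (c0 : {ffun I -> D})
    (g : {ffun I -> D} -> R) :
  (forall i, 0 <= g i) ->
  exists c, \sum_i g i <= (#|D| ^ (#|I| - #|B|))%:R * \sum_(i | agree_off c i) g i.
Proof.
move=> g_ge0; pose mass c := \sum_(i | agree_off c i) g i.
have [c _ c_max] := @arg_maxP _ R _ c0 xpredT mass erefl.
exists c.
have count_gt0 : (0 < #|D| ^ #|B|)%N.
  rewrite -(card_agree_off c0); apply/card_gt0P; exists c0.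
  by rewrite inE; apply/forallP => r; rewrite eqxx implybT.
have double_count : \sum_c' mass c' = (#|D| ^ #|B|)%:R * \sum_i g i.
  rewrite /mass (exchange_big_dep xpredT) //= mulr_sumr; apply: eq_bigr => i _.
  by rewrite sumr_const -(card_agree_off i) mulr_natl.
have mass_le : \sum_c' mass c' <= (#|D| ^ #|I|)%:R * mass c.
  apply: (le_trans (ler_sum _ (fun c' _ => c_max c' isT))).
  by rewrite sumr_const card_ffun mulr_natl.
rewrite -(ler_pM2l (_ : 0 < (#|D| ^ #|B|)%:R)) ?ltr0n // -double_count.
by rewrite mulrA -natrM -expnD subnKC // max_card.
Qed.

End Fibers.

Lemma enc_eqE (k d : nat) (B : {set 'I_k}) (i c : {ffun 'I_k -> 'I_d}) :
  (enc B i == enc B c) = [forall r, (r \in B) ==> (i r == c r)].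
Proof.
rewrite /enc (inj_eq (@cast_ord_inj _ _ _)) (inj_eq enum_rank_inj).
apply/eqP/forallP => [/ffunP ic r | ic]; last first.
  by apply/ffunP => s; rewrite !ffunE; apply/eqP/(implyP (ic (val s)))/valP.
by apply/implyP => rB; have := ic (Sub r rB); rewrite !ffunE => ->.
Qed.

Lemma agree_off_enc_inj (k d : nat) (B : {set 'I_k}) (c i i' : {ffun 'I_k -> 'I_d}) :
  agree_off B c i -> agree_off B c i' -> enc B i = enc B i' -> i = i'.
Proof.
move=> /forallP ci /forallP ci' /eqP; rewrite enc_eqE => /forallP ii'; apply/ffunP => r.
have [rB | rNB] := boolP (r \in B); first exact/eqP/(implyP (ii' r)).
by rewrite (eqP (implyP (ci r) rNB)) (eqP (implyP (ci' r) rNB)).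
Qed.

Lemma unfold_form (R : realType) (k d : nat) (A : tensor R k d) (P : {set {set 'I_k}})
    (x : forall j : 'I_#|P|, 'I_(unfold_dims d j) -> R) :
  \sum_m unfold A P m * \prod_j x j (m j)
    = \sum_i A i * \prod_j x j (enc (blk j) i).
Proof.
pose encs i : {dffun forall j : 'I_#|P|, 'I_(unfold_dims d j)} := [ffun j => enc (blk j) i].
rewrite (partition_big encs xpredT) //=; apply: eq_bigr => m _.
rewrite /unfold big_distrl /=.
have encsE i : [forall j, enc (blk j) i == m j] = (encs i == m).
  apply/forallP/eqP => [im | <- j]; last by rewrite ffunE.
  by apply/ffunP => j; rewrite ffunE; apply/eqP/im.
rewrite (eq_bigl _ _ encsE); apply: eq_bigr => i /eqP <-.
by congr (_ * _); apply: eq_bigr => j _; rewrite ffunE.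
Qed.

Lemma frob_dim0 (R : realType) (k : nat) (A : tensor R k 0) : (0 < k)%N -> frob A = 0.
Proof. by move=> k_gt0; rewrite /frob big1 ?sqrtr0 // => i _; case: (i (Ordinal k_gt0)). Qed.

Section Partition.
Variables (k : nat) (P : {set {set 'I_k}}).
Hypothesis P_part : finset.partition P [set: 'I_k].

Lemma blk_in (j : 'I_#|P|) : blk j \in P.
Proof. exact: enum_valP. Qed.

Lemma blk_gt0 (j : 'I_#|P|) : (0 < #|blk j|)%N.
Proof.
have /and3P [_ _ P0] := P_part.
by rewrite card_gt0; apply: contraNneq P0 => <-; apply: blk_in.
Qed.

Lemma blk_cover (r : 'I_k) : exists j : 'I_#|P|, r \in blk j.
Proof.
have /and3P [/eqP P_cover _ _] := P_part.
have : r \in finset.cover P by rewrite P_cover inE.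
case/finset.bigcupP => B BP rB.
by exists (enum_rank_in BP B); rewrite /blk enum_rankK_in.
Qed.

Lemma blk_disjoint (j j' : 'I_#|P|) : j != j' -> [disjoint blk j & blk j'].
Proof.
have /and3P [_ P_triv _] := P_part.
move=> jj'; apply: (finset.trivIsetP P_triv); rewrite ?blk_in //.
by apply: contra jj' => /eqP /enum_val_inj ->.
Qed.

Lemma agree_off_blkE (d : nat) (j0 : 'I_#|P|) (c i : {ffun 'I_k -> 'I_d}) :
  [forall (j | j != j0), enc (blk j) i == enc (blk j) c] = agree_off (blk j0) c i.
Proof.
apply/forallP/forallP => [ic r | ic j].
  apply/implyP => rNj0; have [j rj] := blk_cover r.
  have jj0 : j != j0 by apply: contraNneq rNj0 => <-.
  by have := ic j; rewrite jj0 enc_eqE => /forallP /(_ r); rewrite rj.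
apply/implyP => jj0; rewrite enc_eqE; apply/forallP => r; apply/implyP => rj.
exact: (implyP (ic r) (negbT (disjointFr (blk_disjoint jj0) rj))).
Qed.

Lemma exists_large_blk : (0 < #|P|)%N -> exists j0 : 'I_#|P|, (k <= #|P| * #|blk j0|)%N.
Proof.
move=> P_gt0.
have [j0 _ j0_max] := @arg_maxP _ nat _ (Ordinal P_gt0) xpredT (fun j => #|blk j|) erefl.
exists j0; rewrite -[k in (k <= _)%N]card_ord -cardsT (card_partition P_part) big_enum_val.
rewrite -[X in (_ <= X * _)%N]card_ord -sum_nat_const.
by apply: leq_sum => j _; apply: j0_max.
Qed.

Lemma sqrt_fiber_le_snorm_unfold (R : realType) (d : nat) (A : tensor R k d)
    (j0 : 'I_#|P|) (c : {ffun 'I_k -> 'I_d}) :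
  Num.sqrt (\sum_(i | agree_off (blk j0) c i) A i ^+ 2) <= snorm (unfold A P).
Proof.
set B0 := blk j0.
pose v (j : 'I_#|P|) (m : 'I_(unfold_dims d j)) :=
  \sum_(i | agree_off B0 c i && (enc (blk j) i == m)) A i.
pose x (j : 'I_#|P|) : 'I_(unfold_dims d j) -> R :=
  if j == j0 then normed_dir (enc (blk j) c) (v j) else fun m => (m == enc (blk j) c)%:R.
have x_unit j : \sum_m x j m ^+ 2 = 1.
  by rewrite /x; case: eqP => _; [apply: normed_dir_unit | apply: sum_sqr_delta].
have v_sumsq : \sum_m v j0 m ^+ 2 = \sum_(i | agree_off B0 c i) A i ^+ 2.
  rewrite [RHS](partition_big (enc B0) xpredT) //=; apply: eq_bigr => m _.
  apply: sqr_sum_subsingleton => i i' /andP [ci /eqP im] /andP [ci' /eqP i'm].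
  by apply: agree_off_enc_inj ci ci' _; rewrite im i'm.
have prod_x i : \prod_j x j (enc (blk j) i)
    = normed_dir (enc B0 c) (v j0) (enc B0 i) * (agree_off B0 c i)%:R.
  rewrite (bigD1 j0) //= -agree_off_blkE -prodr_natb /x eqxx; congr (_ * _).
  by apply: eq_bigr => j /negbTE ->.
have value : \sum_i A i * \prod_j x j (enc (blk j) i)
    = \sum_m v j0 m * normed_dir (enc B0 c) (v j0) m.
  under eq_bigr do rewrite prod_x mulrA mulr_natr mulrb.
  rewrite -big_mkcond (partition_big (enc B0) xpredT) //=; apply: eq_bigr => m _.
  by rewrite /v mulr_suml; apply: eq_bigr => i /andP [_ /eqP ->].
apply: le_trans (snorm_ge _ x_unit).
by rewrite unfold_form value normed_dir_dot v_sumsq.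
Qed.

End Partition.

Lemma powRN_half_mul_sqrt_le (R : realType) (a F T : R) (n : nat) :
  0 < a -> F <= a ^+ n * T -> a `^ (- (n%:R / 2)) * Num.sqrt F <= Num.sqrt T.
Proof.
move=> a_gt0 FT; have an_gt0 : 0 < a ^+ n := exprn_gt0 _ a_gt0.
rewrite powRN powRrM powR_mulrn ?(ltW a_gt0) // powR12_sqrt ?(ltW an_gt0) //.
rewrite mulrC ler_pdivrMr ?sqrtr_gt0 // mulrC -sqrtrM ?(ltW an_gt0) //.
exact: ler_wsqrtr.
Qed.

Lemma ceil_ratio_le (R : archiRealFieldType) (k l b : nat) :
  (0 < l)%N -> (k <= l * b)%N -> (Num.ceil (k%:R / l%:R : R))%:~R <= b%:R :> R.
Proof.
move=> l_gt0 klb; rewrite -[b%:R]/(b%:Z%:~R) ler_int ceil_le_int.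
by rewrite ler_pdivrMr ?ltr0n // -natrM ler_nat mulnC.
Qed.

Theorem corollary4p14 (R : realType) (k d l : nat) (A : tensor R k d) :
  (1 <= l <= k)%N ->
  forall P : {set {set 'I_k}},
    finset.partition P [set: 'I_k] -> #|P| = l ->
    (d%:R : R) `^ (- ((k%:R - (Num.ceil (k%:R / l%:R : R))%:~R) / 2))
      * frob A <= snorm (unfold A P).
Proof.
move=> /andP [l_gt0 l_le_k] P P_part card_P.
have P_gt0 : (0 < #|P|)%N by rewrite card_P.
case: d A => [|d] A.
  rewrite frob_dim0 ?(leq_trans l_gt0) // mulr0 (snorm_dim0 _ (Ordinal P_gt0)) //.
  by rewrite /unfold_dims exp0n // blk_gt0.
have [j0 k_le] := exists_large_blk P_part P_gt0; rewrite card_P in k_le.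
have blk_le_k : (#|blk j0| <= k)%N by rewrite -[k in (_ <= k)%N]card_ord max_card.
have [c heavy] := exists_heavy_fiber (blk j0) [ffun=> ord0] (fun i => sqr_ge0 (A i)).
rewrite !card_ord natrX in heavy.
apply: le_trans (sqrt_fiber_le_snorm_unfold P_part A j0 c).
apply: le_trans (powRN_half_mul_sqrt_le (ltr0Sn _ _) heavy).
apply: ler_wpM2r; first exact: sqrtr_ge0.
apply: ler_powR; first by rewrite ler1n.
rewrite lerN2 ler_pM2r ?invr_gt0 ?ltr0n // natrB // lerD2l lerN2.
exact: ceil_ratio_le.
Qed.
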